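(* Let $F$ be a field whose characteristic is not $2$, let $\alpha\in F\setminus\{0\}$, and let $k\geq 4$ be an integer. Then every $x\in F$ can be written as $x=a_1a_2\cdots a_k$ with $a_1,\ldots,a_k\in F$ satisfying $a_1+a_2+\cdots+a_k=\alpha$. *)

From mathcomp Require Import all_boot all_algebra.

(** For four factors, write x = a (-a) c d with c + d = beta, so that c, d
    are the roots of Z^2 - beta Z - x/a^2; choosing a = (s^2 - x)/(s beta)
    for any s != 0 with s^2 != x makes these roots rational in s.  Such an s
    exists unless F = F_3 and x = 1, where beta^4 = 1 = x and 4 beta = beta.
    Every further factor -beta reduces the problem for (x, beta) to the one
    for (-x/beta, 2 beta), with 2 beta != 0 since the characteristic is not 2. *)

From mathcomp Require Import all_boot all_algebra.
From mathcomp Require Import ring.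
From Stdlib Require Import Classical.
Import GRing.Theory.
Local Open Scope ring_scope.

Definition ord_cons {T : Type} {k : nat} (c : T) (a : 'I_k -> T) : 'I_k.+1 -> T :=
  fun i => if unlift ord0 i is Some j then a j else c.

Lemma big_ord_cons (R : Type) (idx : R) (op : R -> R -> R) (k : nat) (c : R)
    (a : 'I_k -> R) :
  \big[op/idx]_(i < k.+1) ord_cons c a i = op c (\big[op/idx]_(i < k) a i).
Proof.
rewrite big_ord_recl /ord_cons unlift_none.
by under eq_bigr do rewrite liftK.
Qed.

Section ProdSumRep.

Variable F : fieldType.

Definition prod_sum_rep (k : nat) (x beta : F) : Prop :=
  exists a : 'I_k -> F, x = \prod_(i < k) a i /\ \sum_(i < k) a i = beta.

Lemma prod_sum_rep0 : prod_sum_rep 0 1 0.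
Proof. by exists (fun=> 0); rewrite !big_ord0. Qed.

Lemma prod_sum_rep_cons {k : nat} {x beta : F} (c : F) :
  prod_sum_rep k x beta -> prod_sum_rep k.+1 (c * x) (c + beta).
Proof.
by case=> a [-> <-]; exists (ord_cons c a); rewrite !big_ord_cons.
Qed.

Lemma prod_sum_rep4 (a b c d : F) :
  prod_sum_rep 4 (a * b * c * d) (a + b + c + d).
Proof.
have rep := prod_sum_rep_cons a (prod_sum_rep_cons b (prod_sum_rep_cons c
  (prod_sum_rep_cons d prod_sum_rep0))).
by rewrite mulr1 addr0 !mulrA !addrA in rep.
Qed.

Lemma prod_sum_rep4_nonsquare (x beta s : F) :
  beta != 0 -> s != 0 -> s ^+ 2 != x -> prod_sum_rep 4 x beta.
Proof.
move=> beta_neq0 s_neq0 sx_neq; rewrite -subr_eq0 in sx_neq.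
set a := (s ^+ 2 - x) / (s * beta).
set c := beta * s ^+ 2 / (s ^+ 2 - x).
set d := - (beta * x / (s ^+ 2 - x)).
have [-> ->] : x = a * - a * c * d /\ beta = a + - a + c + d.
  by rewrite /a /c /d; split; field; rewrite ?sx_neq ?s_neq0 ?beta_neq0.
exact: prod_sum_rep4.
Qed.

Lemma prod_sum_rep_succ (k : nat) (x beta : F) :
  beta != 0 -> prod_sum_rep k (- x / beta) (beta *+ 2) ->
  prod_sum_rep k.+1 x beta.
Proof.
move=> beta_neq0 /(prod_sum_rep_cons (- beta)).
have -> : - beta * (- x / beta) = x by field.
by rewrite mulr2n addKr.
Qed.

Hypothesis two_neq0 : (2%:R : F) != 0.

Lemma prod_sum_rep4_all_square (x beta : F) :
  beta != 0 -> (forall s : F, s != 0 -> s ^+ 2 = x) -> prod_sum_rep 4 x beta.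
Proof.
move=> beta_neq0 sqr_x.
have beta2 := sqr_x _ beta_neq0.
have x1 : x = 1 by rewrite -(sqr_x 1 (oner_neq0 F)) expr1n.
have beta4 : beta * beta * beta * beta = x.
  by transitivity ((beta ^+ 2) ^+ 2); [ring | rewrite beta2 x1 expr1n].
have two_sq1 : (2%:R ^+ 2 : F) = 1 by rewrite sqr_x.
have beta_sum : beta + beta + beta + beta = beta.
  by transitivity (beta * 2%:R ^+ 2); [ring | rewrite two_sq1 mulr1].
by have := prod_sum_rep4 beta beta beta beta; rewrite beta4 beta_sum.
Qed.

Lemma prod_sum_rep4_char_neq2 (x beta : F) :
  beta != 0 -> prod_sum_rep 4 x beta.
Proof.
move=> beta_neq0.
case: (classic (exists2 s : F, s != 0 & s ^+ 2 != x)) => [[s] | no_gap].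
  exact: prod_sum_rep4_nonsquare.
apply: prod_sum_rep4_all_square => // s s_neq0; apply/eqP.
by apply: contra_notT no_gap => sx_neq; exists s.
Qed.

End ProdSumRep.

Theorem theorem1p1 (F : fieldType) (alpha : F) (k : nat) :
  (2%N \notin [pchar F]) -> alpha != 0 -> (4 <= k)%N ->
  forall x : F, exists a : 'I_k -> F,
    x = \prod_(i < k) a i /\ \sum_(i < k) a i = alpha.
Proof.
move=> char_neq2 alpha_neq0 k_ge4 x.
have two_neq0 : (2%:R : F) != 0 by rewrite natf_neq0_pchar pnatE.
rewrite -(subnK k_ge4) addn4.
elim: (k - 4)%N x alpha alpha_neq0 => [|n IHn] x beta beta_neq0.
  exact: prod_sum_rep4_char_neq2.
apply: prod_sum_rep_succ => //; apply: IHn.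
by rewrite -mulr_natr mulf_neq0.
Qed.
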